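(* Let $G=(V,E)$ be a finite graph, $x_e>0$ for $e\in E$, $\Omega=\{0,1\}^E$ and $\Sigma\subset\Omega$. Suppose that $\Sigma$ contains two elements $\eta'\subset\eta$ with $\prod_{e\in\eta'}x_e<\prod_{e\in\eta}x_e$. Then there exists no probability measure $\mathscr{P}$ on $\Omega\times\Sigma$ whose marginal on $\Sigma$ satisfies $\mathscr{P}_\Sigma[\eta]\propto\prod_{e\in\eta}x_e$ and such that, for every $\omega$ with $\mathscr{P}_\Omega[\omega]\neq0$, the conditional measure $\mathscr{P}[\cdot\mid\omega]$ is the uniform measure on $\Sigma^\downarrow(\omega):=\{\eta\in\Sigma\mid\eta\subset\omega\}$.
   Context: Elements of $\{0,1\}^E$ are identified with subsets of $E$; $\mathscr{P}_\Omega$ denotes the marginal on $\Omega$. *)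

From HB Require Import structures.
From mathcomp Require Import all_boot all_order all_algebra.
From mathcomp Require Export reals.
Set Implicit Arguments. Unset Strict Implicit. Unset Printing Implicit Defensive.
Import Order.TTheory GRing.Theory Num.Theory.
Local Open Scope ring_scope.

(* Configurations omega in {0,1}^E are identified with subsets of E : {set E}. *)
Section Defs.
Variables (R : realType) (E : finType).

Definition weight (x : E -> R) (eta : {set E}) : R := \prod_(e in eta) x e.

(* P is a probability measure on Omega x Sigma, viewed as a function on
   {set E} * {set E} that vanishes outside Omega x Sigma. *)
Definition is_prob_on (Sigma : {set {set E}}) (P : {ffun {set E} * {set E} -> R}) : Prop :=
  [/\ forall p, 0 <= P p,
      \sum_p P p = 1
    & forall omega eta, eta \notin Sigma -> P (omega, eta) = 0].

Definition margO (P : {ffun {set E} * {set E} -> R}) (omega : {set E}) : R :=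
  \sum_(eta : {set E}) P (omega, eta).

Definition margS (P : {ffun {set E} * {set E} -> R}) (eta : {set E}) : R :=
  \sum_(omega : {set E}) P (omega, eta).

Definition down (Sigma : {set {set E}}) (omega : {set E}) : {set {set E}} :=
  [set eta in Sigma | eta \subset omega].
End Defs.

From mathcomp Require Import all_boot all_order all_algebra.
Import Order.TTheory GRing.Theory Num.Theory.
Local Open Scope ring_scope.

(* Since eta' is a subset of eta, every omega containing eta also contains
   eta', and the uniform conditional law on Sigma^down(omega) gives both the
   same mass; hence P(omega, eta) <= P(omega, eta') for every omega and, summing
   over omega, P_Sigma[eta] <= P_Sigma[eta'].  With P_Sigma[zeta] = c w(zeta)
   and w(eta') < w(eta) this forces c <= 0, while P_Sigma[eta] >= 0 forces
   c >= 0.  So P_Sigma vanishes on Sigma, and P has total mass 0, not 1. *)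

Lemma weight_gt0 (R : realType) (E : finType) (x : E -> R) (eta : {set E}) :
  (forall e, 0 < x e) -> 0 < weight x eta.
Proof. by move=> x_gt0; apply: prodr_gt0 => e _; apply: x_gt0. Qed.

Section UniformConditional.
Context {R : realType} {E : finType} {Sigma : {set {set E}}}.
Context {P : {ffun {set E} * {set E} -> R}}.

Lemma sum_margS : \sum_eta margS P eta = \sum_p P p.
Proof. by rewrite /margS exchange_big pair_bigA; apply: eq_bigr => -[]. Qed.

Lemma prob_margS_neq0 :
  is_prob_on Sigma P -> ~ {in Sigma, forall zeta, margS P zeta = 0}.
Proof.
case=> _ P_sum1 P_out margS0; move/eqP: P_sum1; apply/negP.
rewrite -sum_margS big1 ?(eq_sym 0) ?oner_eq0 // => zeta _.
have [/margS0 // | zeta_out] := boolP (zeta \in Sigma).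
by apply: big1 => omega _; apply: P_out.
Qed.

Hypothesis P_ge0 : forall p, 0 <= P p.
Hypothesis P_cond : forall omega, margO P omega != 0 -> forall zeta,
  P (omega, zeta) / margO P omega =
    (if zeta \in down Sigma omega then (#|down Sigma omega|%:R)^-1 else 0).

Lemma margO_eq0 omega zeta : margO P omega = 0 -> P (omega, zeta) = 0.
Proof. by move/psumr_eq0P=> -> // eta _; apply: P_ge0. Qed.

Lemma cond_uniform_le omega (eta' eta : {set E}) :
  eta' \in Sigma -> eta' \subset eta -> P (omega, eta) <= P (omega, eta').
Proof.
move=> Sigma_eta' sub_eta'_eta.
have [/margO_eq0 -> // | margO_neq0] := eqVneq (margO P omega) 0.
have P_unif zeta : P (omega, zeta) =
    (if zeta \in down Sigma omega then (#|down Sigma omega|%:R)^-1 else 0)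
      * margO P omega.
  by rewrite -(P_cond _ margO_neq0) divfK.
rewrite (P_unif eta); case: ifP => [down_eta|_]; last by rewrite mul0r.
have down_eta' : eta' \in down Sigma omega.
  move: down_eta; rewrite !inE Sigma_eta' => /andP[_ sub_eta_omega].
  exact: subset_trans sub_eta'_eta sub_eta_omega.
by rewrite (P_unif eta') down_eta'.
Qed.

Lemma margS_le_sub {eta' eta : {set E}} :
  eta' \in Sigma -> eta' \subset eta -> margS P eta <= margS P eta'.
Proof.
by move=> Sigma_eta' sub; apply: ler_sum => omega _; apply: cond_uniform_le.
Qed.

End UniformConditional.

Theorem lemma3p4 (R : realType) (E : finType) (x : E -> R)
  (hx : forall e, 0 < x e) (Sigma : {set {set E}}) (eta' eta : {set E})
  (h' : eta' \in Sigma) (h : eta \in Sigma) (hsub : eta' \subset eta)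
  (hlt : weight x eta' < weight x eta) :
  ~ (exists P : {ffun {set E} * {set E} -> R},
       [/\ is_prob_on Sigma P,
           (exists c : R, forall zeta, zeta \in Sigma -> margS P zeta = c * weight x zeta)
         & forall omega, margO P omega != 0 ->
             forall zeta, P (omega, zeta) / margO P omega =
               (if zeta \in down Sigma omega then (#|down Sigma omega|%:R)^-1 else 0)]).
Proof.
move=> [P [P_prob [c margS_prop] P_cond]].
have P_ge0 : forall p, 0 <= P p by case: P_prob.
have le_margS := margS_le_sub P_ge0 P_cond h' hsub.
have c_le0 : c <= 0.
  rewrite leNgt; apply/negP => c_gt0.
  by move: le_margS; rewrite !margS_prop // ler_pM2l // leNgt hlt.
have c_ge0 : 0 <= c.
  have margS_ge0 : 0 <= margS P eta by apply: sumr_ge0 => omega _.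
  by rewrite margS_prop // pmulr_lge0 ?weight_gt0 in margS_ge0.
have c0 : c = 0 by apply/eqP; rewrite eq_le c_le0 c_ge0.
apply: (prob_margS_neq0 P_prob) => zeta Sigma_zeta.
by rewrite margS_prop // c0 mul0r.
Qed.
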